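(* Let $0<q<1$, $0\le p<1$, and let $\tilde P_n(x)=\sum_{k=0}^n\tilde b_{k,n}x^k$ be the orthonormal polynomials (positive leading coefficients) for the moment sequence $(\tilde s_n)$. The monic polynomials $\tilde p_n=\tilde P_n/\tilde b_{n,n}$ satisfy $\tilde p_n(x)=(x-\tilde c_n)\tilde p_{n-1}(x)-\tilde\lambda_n\tilde p_{n-2}(x)$ for $n\ge1$ ($\tilde p_{-1}=0$, $\tilde p_0=1$), where \[ \tilde c_1=\frac{(p;q)_\infty}{\Delta_1}q^{-3/2}, \] and for $n\ge1$ \[ \tilde c_{n+1}=\bigl[(1-q^{n+1})(pq^n;q)_\infty-(1-pq^{n+1})(q^n;q)_\infty\bigr]\frac{q^{-2n-3/2}}{(1-q)\Delta_{n+1}} -\bigl[(1-q^{n})(pq^{n-1};q)_\infty-(1-pq^{n})(q^{n-1};q)_\infty\bigr]\frac{q^{-2n+1/2}}{(1-q)\Delta_n}, \] \[ \tilde\lambda_{n+1}=\frac{\Delta_{n-1}\Delta_{n+1}}{\Delta_{n}^2}(1-q^{n})(1-pq^{n})q^{-4n}. \]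
   Context: For $a\in\mathbb C$ and $n\in\{0,1,\dots\}\cup\{\infty\}$, $(a;q)_n=\prod_{k=1}^n(1-aq^{k-1})$. Set $\Delta_n=(pq^n;q)_\infty-(q^n;q)_\infty$ for $n\ge0$. The moment sequence is $\tilde s_0=q^{-1/2}\bigl[1-(q;q)_\infty/(pq;q)_\infty\bigr]$ and $\tilde s_n=(p;q)_nq^{-(n+1)^2/2}$ for $n\ge1$. *)

From mathcomp Require Import all_boot all_order all_algebra.
From mathcomp Require Import all_classical all_reals all_analysis.
Set Implicit Arguments. Unset Strict Implicit. Unset Printing Implicit Defensive.
Import Order.TTheory GRing.Theory Num.Theory numFieldNormedType.Exports.
Local Open Scope ring_scope.

Section QDefs.
Variable R : realType.

Definition qpoch (a q : R) (n : nat) : R := \prod_(k < n) (1 - a * q ^+ k).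

Definition qpoch_inf (a q : R) : R := limn (qpoch a q).

Definition Delta (p q : R) (n : nat) : R :=
  qpoch_inf (p * q ^+ n) q - qpoch_inf (q ^+ n) q.

Definition stilde (p q : R) (n : nat) : R :=
  if n is 0 then q `^ (- (1 / 2)) * (1 - qpoch_inf q q / qpoch_inf (p * q) q)
  else qpoch p q n * q `^ (- ((n.+1 ^ 2)%:R / 2)).

Definition Lmom (p q : R) (P : {poly R}) : R :=
  \sum_(i < size P) P`_i * stilde p q i.

(* c~_n for n >= 1 (value at 0 is irrelevant, set to 0) *)
Definition ctilde (p q : R) (n : nat) : R :=
  match n with
  | 0 => 0
  | 1 => qpoch_inf p q / Delta p q 1 * q `^ (- (3 / 2))
  | m.+1 =>
      ((1 - q ^+ m.+1) * qpoch_inf (p * q ^+ m) q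
         - (1 - p * q ^+ m.+1) * qpoch_inf (q ^+ m) q)
        * (q `^ (- (2 * m)%:R - 3 / 2) / ((1 - q) * Delta p q m.+1))
      - ((1 - q ^+ m) * qpoch_inf (p * q ^+ m.-1) q
         - (1 - p * q ^+ m) * qpoch_inf (q ^+ m.-1) q)
        * (q `^ (- (2 * m)%:R + 1 / 2) / ((1 - q) * Delta p q m))
  end.

(* lambda~_n for n >= 2 (lambda~_0, lambda~_1 irrelevant, set to 0) *)
Definition lamtilde (p q : R) (n : nat) : R :=
  match n with
  | 0 | 1 => 0
  | m.+1 => Delta p q m.-1 * Delta p q m.+1 / (Delta p q m) ^+ 2
             * (1 - q ^+ m) * (1 - p * q ^+ m) * q ^- (4 * m)
  end.

(* pair (p~_n, p~_{n+1}) built by the three-term recurrence,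
   with p~_{-1} = 0, p~_0 = 1 *)
Fixpoint ptilde_pair (p q : R) (n : nat) : {poly R} * {poly R} :=
  match n with
  | 0 => (1, 'X - (ctilde p q 1)%:P)
  | n.+1 => let: (a, b) := ptilde_pair p q n in
            (b, ('X - (ctilde p q n.+2)%:P) * b - (lamtilde p q n.+2) *: a)
  end.

Definition ptilde_rec (p q : R) (n : nat) : {poly R} := (ptilde_pair p q n).1.

End QDefs.

From mathcomp Require Import all_boot all_order all_algebra.
From mathcomp Require Import all_classical all_reals all_analysis.
From mathcomp Require Import ring lra zify.
Import Order.TTheory GRing.Theory Num.Theory numFieldNormedType.Exports.
Set Implicit Arguments. Unset Strict Implicit. Unset Printing Implicit Defensive.
Local Open Scope ring_scope.

(* The monic orthogonal polynomials are written down in closed form, and the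
   recurrence coefficients are read off them through the general three-term
   recurrence of monic orthogonal polynomials: [c~_n] is a difference of
   subleading coefficients and [lambda~_n] a quotient of norms.  The normalized
   [P_n] is that polynomial, since orthogonality to all lower degrees determines
   a monic polynomial.
   For the closed form, take the nodes [z_j = q^-j] and the weights [w_(n,j)],
   the coefficients of [prod_(i<n) (1 - q^i x)].  A weighted sum
   [sum_j w_(n,j) f(z_j)] with [deg f <= n] only sees the leading coefficient of
   [f], because the weight polynomial vanishes at [z_m] for [m < n].  For
   [j >= 1], [s~_(j+k) / s~_j] is a polynomial of degree [k] in [z_j], so the
   polynomial with coefficients [w_(n,j) (a_n + Delta_(n+1) z_j) / ((z_j - p) s~_j)]
   is orthogonal to [x^k] for [1 <= k < n]; the exceptional moment [s~_0] is
   handled by a partial-fraction identity, which fixes [a_n]. *)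

Section QPochhammer.
Variable R : realType.
Implicit Types (a q : R).

Lemma qpochS a q n : qpoch a q n.+1 = qpoch a q n * (1 - a * q ^+ n).
Proof. by rewrite /qpoch big_ord_recr. Qed.

Lemma qpoch0 a q : qpoch a q 0 = 1.
Proof. by rewrite /qpoch big_ord0. Qed.

Lemma qpochSl a q n : qpoch a q n.+1 = (1 - a) * qpoch (a * q) q n.
Proof.
rewrite /qpoch big_ord_recl expr0 mulr1; congr (_ * _).
by apply: eq_bigr => i _; rewrite lift0 exprS mulrA.
Qed.

Lemma qpoch_gt0 a q n : 0 <= a < 1 -> 0 <= q <= 1 -> 0 < qpoch a q n.
Proof.
move=> /andP[a0 a1] /andP[q0 q1]; apply: prodr_gt0 => i _.
by rewrite subr_gt0 (le_lt_trans _ a1) // ler_piMr ?exprn_ile1.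
Qed.

Section UnitInterval.
Variables a q : R.
Hypotheses (a01 : 0 <= a <= 1) (q01 : 0 <= q <= 1).

Lemma mulr_expr_01 n : 0 <= a * q ^+ n <= 1.
Proof.
case/andP: a01 => a0 a1; case/andP: q01 => q0 q1.
by rewrite mulr_ge0 ?exprn_ge0 // mulr_ile1 ?exprn_ge0 ?exprn_ile1.
Qed.

Lemma qpoch_01 n : 0 <= qpoch a q n <= 1.
Proof.
elim: n => [|n /andP[I0 I1]]; first by rewrite qpoch0 ler01 lexx.
case/andP: (mulr_expr_01 n) => h0 h1.
rewrite qpochS mulr_ge0 ?subr_ge0 //=.
by rewrite mulr_ile1 // ?subr_ge0 // lerBlDr lerDl.
Qed.

Lemma qpoch_nonincreasing : nonincreasing_seq (qpoch a q).
Proof.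
apply/nonincreasing_seqP => n; rewrite qpochS.
case/andP: (qpoch_01 n) => I0 _; case/andP: (mulr_expr_01 n) => h0 _.
by rewrite ler_piMr // lerBlDr lerDl.
Qed.

Lemma qpoch_cvg : cvgn (qpoch a q).
Proof.
apply: nonincreasing_is_cvgn; first exact: qpoch_nonincreasing.
by exists 0 => y [n _ <-]; case/andP: (qpoch_01 n).
Qed.

End UnitInterval.

Lemma qpoch_infSl a q : 0 <= a <= 1 -> 0 <= q <= 1 ->
  qpoch_inf a q = (1 - a) * qpoch_inf (a * q) q.
Proof.
move=> a01 q01; have aq01 : 0 <= a * q <= 1 by rewrite -[q]expr1 mulr_expr_01.
apply: cvg_lim => //; rewrite -cvg_shiftS /=.
have -> : (fun n => qpoch a q n.+1) = (fun n => (1 - a) * qpoch (a * q) q n).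
  by apply: funext => n; rewrite qpochSl.
by apply: cvgMl_tmp; exact: qpoch_cvg.
Qed.

Lemma qpoch_infSn a q N : 0 <= a <= 1 -> 0 <= q <= 1 ->
  qpoch_inf a q = qpoch a q N * qpoch_inf (a * q ^+ N) q.
Proof.
move=> a01 q01; elim: N => [|N IH]; first by rewrite qpoch0 mul1r expr0 mulr1.
rewrite IH qpochS (qpoch_infSl (mulr_expr_01 a01 q01 N) q01).
by rewrite exprSr !mulrA.
Qed.

(* The partial products decrease from [1] by at most [a (1 + q + ... + q^(n-1))]. *)
Lemma qpoch_lb a q n : 0 <= a <= 1 -> 0 <= q < 1 -> 1 - a / (1 - q) <= qpoch a q n.
Proof.
move=> a01 /andP[q0 q1]; have q01 : 0 <= q <= 1 by rewrite q0 ltW.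
have q1' : 0 < 1 - q by rewrite subr_gt0.
case/andP: (a01) => a0 a1.
suff H : 1 - a * (1 - q ^+ n) / (1 - q) <= qpoch a q n.
  apply: le_trans H; rewrite lerD2l lerN2 ler_pM2r ?invr_gt0 //.
  by rewrite ler_piMr // lerBlDr lerDl exprn_ge0.
elim: n => [|n IH]; first by rewrite expr0 subrr mulr0 mul0r subr0 qpoch0.
case/andP: (qpoch_01 a01 q01 n) => I0 I1.
have h1 : 0 <= a * q ^+ n by rewrite mulr_ge0 // exprn_ge0.
have -> : 1 - a * (1 - q ^+ n.+1) / (1 - q)
          = 1 - a * (1 - q ^+ n) / (1 - q) - a * q ^+ n.
  by rewrite exprS; field; rewrite subr_eq0 gt_eqF.
rewrite qpochS [qpoch _ _ _ * _]mulrBr mulr1; apply: lerD => //.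
by rewrite lerN2 ler_piMl.
Qed.

Lemma qpoch_inf_lb a q : 0 <= a <= 1 -> 0 <= q < 1 -> 1 - a / (1 - q) <= qpoch_inf a q.
Proof.
move=> a01 q1; have q01 : 0 <= q <= 1 by case/andP: q1 => -> /ltW ->.
apply: limr_ge; first exact: qpoch_cvg.
by near=> n; apply: qpoch_lb.
Unshelve. all: end_near.
Qed.

Lemma qpoch_inf_gt0 a q : 0 <= a < 1 -> 0 < q < 1 -> 0 < qpoch_inf a q.
Proof.
move=> a01 /andP[q0 q1].
have q01 : 0 <= q <= 1 by rewrite !ltW.
have q1' : 0 < 1 - q by rewrite subr_gt0.
case/andP: (a01) => a0 a1; have a01' : 0 <= a <= 1 by rewrite a0 ltW.
(* Split off a finite product, after which [a q^N] is small enough for [qpoch_lb]. *)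
have qnorm : `|q| < 1 by rewrite ger0_norm ?ltW.
have [N _ /(_ N (leqnn N)) /= qN] :=
  cvgr_lt _ (cvg_expr qnorm) ((1 - q) / 2) (divr_gt0 q1' (ltr0Sn _ 1)).
rewrite (qpoch_infSn N a01' q01) mulr_gt0 ?qpoch_gt0 //.
have q1N : 0 <= q < 1 by rewrite ltW.
apply: (lt_le_trans _ (qpoch_inf_lb (mulr_expr_01 a01' q01 N) q1N)).
rewrite subr_gt0 ltr_pdivrMr // mul1r.
apply: (le_lt_trans _ (lt_trans qN _)).
  by rewrite ler_piMl ?exprn_ge0 ?ltW.
by rewrite ltr_pdivrMr // ltr_pMr // ltr1n.
Qed.

End QPochhammer.

Lemma leq_size_coef0 (F : nzSemiRingType) (g : {poly F}) n :
  (size g <= n.+1)%N -> g`_n = 0 -> (size g <= n)%N.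
Proof.
move=> /leq_sizeP gS gn; apply/leq_sizeP => j.
by rewrite leq_eqVlt => /orP[/eqP <- // | /gS].
Qed.

Section MonicOrthogonal.
Variable F : fieldType.
Variable L : {poly F} -> F.
Hypothesis L_add : {morph L : f g / f + g}.
Hypothesis L_scale : forall c f, L (c *: f) = c * L f.

Lemma functional0 : L 0 = 0.
Proof. by rewrite -(scale0r 0) L_scale mul0r. Qed.

Lemma functionalB f g : L (f - g) = L f - L g.
Proof. by rewrite L_add -scaleN1r L_scale mulN1r. Qed.

Variable t : nat -> {poly F}.
Hypothesis t_size : forall n, size (t n) = n.+1.
Hypothesis t_monic : forall n, (t n)`_n = 1.
Hypothesis t_orth : forall n k, (k < n)%N -> L (t n * 'X^k) = 0.
Local Notation h n := (L (t n * 'X^n)).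
Hypothesis h_neq0 : forall n, h n != 0.
Local Notation e n := ((t n)`_n.-1).

Lemma mops_coef_gt n i : (n < i)%N -> (t n)`_i = 0.
Proof. by move=> ni; rewrite nth_default // t_size. Qed.

Lemma orth_lower_eq0 m (g : {poly F}) : (size g <= m)%N ->
  (forall k, (k < m)%N -> L (g * 'X^k) = 0) -> g = 0.
Proof.
elim: m g => [|m IH] g gm g_orth; first by apply/size_poly_leq0P.
set c := g`_m.
have gc : g - c *: t m = 0.
  apply: IH => [|k km].
    apply: leq_size_coef0; last by rewrite coefB coefZ t_monic mulr1 subrr.
    apply: leq_trans (size_polyD _ _) _; rewrite size_polyN geq_max gm /=.
    by apply: leq_trans (size_scale_leq _ _) _; rewrite t_size.
  by rewrite mulrBl functionalB -scalerAl L_scale g_orth ?t_orth ?mulr0 ?subrr // ltnW.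
move/eqP: gc; rewrite subr_eq0 => /eqP gE.
have /eqP := g_orth m (ltnSn m); rewrite gE -scalerAl L_scale mulf_eq0.
by rewrite (negbTE (h_neq0 m)) orbF => /eqP ->; rewrite scale0r.
Qed.

Lemma mops1 : t 1 = 'X - (- e 1)%:P.
Proof.
apply/polyP => -[|[|i]]; rewrite coefB coefX coefC /=.
- by rewrite sub0r opprK.
- by rewrite t_monic subr0.
- by rewrite mops_coef_gt // subrr.
Qed.

Lemma mops_rec n :
  t n.+2 = ('X - (e n.+1 - e n.+2)%:P) * t n.+1 - (h n.+1 / h n) *: t n.
Proof.
set c := e n.+1 - e n.+2; set lam := h n.+1 / h n.
apply/eqP; rewrite eq_sym -subr_eq0; apply/eqP.
have XcM i : (('X - c%:P) * t n.+1)`_i.+1 = (t n.+1)`_i - c * (t n.+1)`_i.+1.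
  by rewrite mulrBl coefB coefXM coefCM.
(* The difference has degree at most [n]: its coefficients at [n+2] and [n+1] cancel. *)
apply: (orth_lower_eq0 (m := n.+1)) => [|k kn].
  apply: leq_size_coef0; last first.
    rewrite !coefB XcM coefZ t_monic (mops_coef_gt (ltnSn n)) /c /=.
    by rewrite mulr0 subr0 mulr1; ring.
  apply: leq_size_coef0; last first.
    rewrite !coefB XcM coefZ !t_monic (mops_coef_gt (ltnSn n.+1)).
    by rewrite (mops_coef_gt (ltnW (ltnSn n.+1))) !mulr0 !subr0 subrr.
  apply: leq_trans (size_polyD _ _) _; rewrite size_polyN geq_max t_size leqnn andbT.
  apply: leq_trans (size_polyD _ _) _; rewrite size_polyN geq_max.
  apply/andP; split; first by rewrite (leq_trans (size_polyMleq _ _)) // size_XsubC t_size.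
  by have := size_scale_leq lam (t n); rewrite t_size => /leq_trans; apply; lia.
have XcX : ('X - c%:P) * t n.+1 * 'X^k = t n.+1 * 'X^(k.+1) - c *: (t n.+1 * 'X^k).
  by rewrite -mul_polyC exprS; ring.
rewrite mulrBl functionalB mulrBl functionalB XcX functionalB -!scalerAl !L_scale.
move: kn; rewrite ltnS leq_eqVlt => /orP[/eqP -> | kn].
  by rewrite (@t_orth n.+1 n) ?(@t_orth n.+2 n) // /lam mulfVK // mulr0 !subr0 subrr.
by rewrite !t_orth ?mulr0 ?subr0 //; lia.
Qed.

Variable P : nat -> {poly F}.
Hypothesis P_size : forall n, size (P n) = n.+1.
Hypothesis P_orth : forall m n, m != n -> L (P m * P n) = 0.

Lemma orth_seq_lower N (g : {poly F}) : (size g <= N)%N -> L (P N * g) = 0.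
Proof.
suff: forall m, (m <= N)%N -> forall g : {poly F}, (size g <= m)%N -> L (P N * g) = 0.
  by move=> orth_m; apply: orth_m.
move=> {g}.
elim=> [|m IH] mN g gm.
  by move/size_poly_leq0P: gm => ->; rewrite mulr0 functional0.
have Pm_neq0 : lead_coef (P m) != 0 by rewrite lead_coef_eq0 -size_poly_gt0 P_size.
have Pm_lead : (P m)`_m = lead_coef (P m) by rewrite lead_coefE P_size.
set c := g`_m / lead_coef (P m).
rewrite -(subrK (c *: P m) g) mulrDr L_add -scalerAr L_scale P_orth ?mulr0 ?addr0.
  apply: IH; first exact: ltnW.
  apply: leq_size_coef0; last by rewrite coefB coefZ Pm_lead mulfVK ?subrr.
  apply: leq_trans (size_polyD _ _) _; rewrite size_polyN geq_max gm /=.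
  by apply: leq_trans (size_scale_leq _ _) _; rewrite P_size.
by rewrite neq_ltn mN orbT.
Qed.

Lemma orth_seq_normalized n : (lead_coef (P n))^-1 *: P n = t n.
Proof.
have Pn_neq0 : lead_coef (P n) != 0 by rewrite lead_coef_eq0 -size_poly_gt0 P_size.
have Pn_lead : (P n)`_n = lead_coef (P n) by rewrite lead_coefE P_size.
apply/eqP; rewrite -subr_eq0; apply/eqP; apply: (orth_lower_eq0 (m := n)) => [|k kn].
  apply: leq_size_coef0.
    apply: leq_trans (size_polyD _ _) _; rewrite size_polyN geq_max t_size leqnn andbT.
    by apply: leq_trans (size_scale_leq _ _) _; rewrite P_size.
  by rewrite coefB coefZ Pn_lead mulVf // t_monic subrr.
rewrite mulrBl functionalB t_orth // subr0 -scalerAl L_scale orth_seq_lower ?mulr0 //.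
by rewrite size_polyXn.
Qed.

End MonicOrthogonal.

Lemma ptilde_rec_eq (R : realType) (p q : R) (t : nat -> {poly R}) :
  t 0 = 1 -> t 1 = 'X - (ctilde p q 1)%:P ->
  (forall n, t n.+2 = ('X - (ctilde p q n.+2)%:P) * t n.+1 - lamtilde p q n.+2 *: t n) ->
  forall n, ptilde_rec p q n = t n.
Proof.
move=> t_0 t_1 t_S n; rewrite /ptilde_rec.
suff -> : ptilde_pair p q n = (t n, t n.+1) by [].
by elim: n => [|n /= ->]; rewrite ?t_0 ?t_1 ?t_S.
Qed.

Section MomentFunctional.
Variables (R : realType) (p q : R).
Local Notation L := (Lmom p q).

Lemma LmomE (f : {poly R}) N : (size f <= N)%N ->
  L f = \sum_(i < N) f`_i * stilde p q i.
Proof.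
move=> fN; rewrite /Lmom (big_ord_widen N (fun i => f`_i * stilde p q i) fN).
rewrite [RHS](bigID (fun i : 'I_N => (i < size f)%N)) /= [X in _ + X]big1 ?addr0 //.
by move=> i; rewrite -leqNgt => fi; rewrite nth_default // mul0r.
Qed.

Lemma Lmom_add : {morph L : f g / f + g}.
Proof.
move=> f g; rewrite (LmomE (size_polyD f g)) (LmomE (leq_maxl (size f) (size g)))
  (LmomE (leq_maxr (size f) (size g))).
by rewrite -big_split; apply: eq_bigr => i _; rewrite coefD mulrDl.
Qed.

Lemma Lmom_scale c f : L (c *: f) = c * L f.
Proof.
rewrite (LmomE (size_scale_leq _ _)) (LmomE (leqnn _)) mulr_sumr.
by apply: eq_bigr => i _; rewrite coefZ mulrA.
Qed.

Lemma Lmom_polyMXn (E : nat -> R) N k :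
  L (\poly_(j < N) E j * 'X^k) = \sum_(j < N) E j * stilde p q (j + k).
Proof.
rewrite poly_def mulr_suml (big_morph _ Lmom_add (functional0 Lmom_scale)).
apply: eq_bigr => j _; rewrite -scalerAl -exprD Lmom_scale.
rewrite (LmomE (N := (j + k).+1)) ?size_polyXn // big_ord_recr /= coefXn eqxx mul1r.
by rewrite big1 ?add0r // => i _; rewrite coefXn (ltn_eqF (ltn_ord i)) mul0r.
Qed.

End MomentFunctional.

Section QDifference.
Variables (F : fieldType) (q : F).
Hypothesis q_neq0 : q != 0.

Definition node (j : nat) : F := (q ^+ j)^-1.
Definition wpoly (n : nat) : {poly F} := \prod_(i < n) (1 - q ^+ i *: 'X).
Definition wcoef n j := (wpoly n)`_j.
Definition wnode n := (wpoly n).[node n].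

Let expq_neq0 j : q ^+ j != 0. Proof. exact: expf_neq0. Qed.

Lemma mul_node j : q ^+ j * node j = 1.
Proof. by rewrite /node divff ?expq_neq0. Qed.

Lemma wpolyS n : wpoly n.+1 = wpoly n - q ^+ n *: (wpoly n * 'X).
Proof. by rewrite /wpoly big_ord_recr /= mulrBr mulr1 -scalerAr. Qed.

Lemma size_wpoly n : (size (wpoly n) <= n.+1)%N.
Proof.
elim: n => [|n IH]; first by rewrite /wpoly big_ord0 size_poly1.
rewrite wpolyS; apply: leq_trans (size_polyD _ _) _; rewrite size_polyN geq_max.
rewrite (leq_trans IH) //=; apply: leq_trans (size_scale_leq _ _) _.
by apply: leq_trans (size_polyMleq _ _) _; rewrite size_polyX; lia.
Qed.

Lemma horner_wpoly n x : (wpoly n).[x] = \prod_(i < n) (1 - q ^+ i * x).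
Proof. by rewrite /wpoly horner_prod; apply: eq_bigr => i _; rewrite !hornerE. Qed.

Lemma wcoef0 n : wcoef n 0 = 1.
Proof.
by rewrite /wcoef -horner_coef0 horner_wpoly big1 // => i _; rewrite mulr0 subr0.
Qed.

Lemma wcoef_gt n j : (n < j)%N -> wcoef n j = 0.
Proof. by move=> nj; rewrite /wcoef nth_default // (leq_trans (size_wpoly n)). Qed.

Lemma wcoefS n i : wcoef n.+1 i.+1 = wcoef n i.+1 - q ^+ n * wcoef n i.
Proof. by rewrite /wcoef wpolyS coefB coefZ coefMX. Qed.

Lemma wcoef_top n : wcoef n n = \prod_(i < n) (- q ^+ i).
Proof.
elim: n => [|n IH]; first by rewrite wcoef0 big_ord0.
by rewrite wcoefS wcoef_gt // IH big_ord_recr /= sub0r; ring.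
Qed.

Lemma wcoef_top_neq0 n : wcoef n n != 0.
Proof. by rewrite wcoef_top; apply/prodf_neq0 => i _; rewrite oppr_eq0 expq_neq0. Qed.

Lemma wcoef_subtop n : wcoef n.+1 n = - wcoef n.+1 n.+1 * \sum_(i < n.+1) node i.
Proof.
elim: n => [|n IH].
  by rewrite wcoef0 wcoefS wcoef0 (wcoef_gt (ltnSn 0)) big_ord1 /node expr0 invr1; ring.
rewrite wcoefS IH [wcoef n.+2 n.+2]wcoefS (wcoef_gt (ltnSn n.+1)) (big_ord_recr n.+1) /=.
have := mul_node n.+1; set c := wcoef n.+1 n.+1; set S := \sum_(i < n.+1) node i => qz.
rewrite sub0r -mulNr opprK; transitivity (c + q ^+ n.+1 * c * S); first by ring.
by rewrite mulrDr addrC; congr (_ + _); rewrite mulrAC qz mul1r.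
Qed.

(* The weights annihilate the nodes' powers [node j ^+ m = node m ^+ j] for [m < n],
   since [wpoly n] vanishes at [node m]. *)
Lemma sum_wcoef_horner n (f : {poly F}) : (size f <= n.+1)%N ->
  \sum_(j < n.+1) wcoef n j * f.[node j] = f`_n * wnode n.
Proof.
move=> fn.
under eq_bigr do rewrite (horner_coef_wide _ fn) mulr_sumr.
rewrite exchange_big /=.
transitivity (\sum_(m < n.+1) f`_m * (wpoly n).[node m]).
  apply: eq_bigr => m _; rewrite (horner_coef_wide _ (size_wpoly n)) mulr_sumr.
  apply: eq_bigr => j _; rewrite /node /wcoef !exprVn -!exprM mulnC; ring.
rewrite big_ord_recr /= big1 ?add0r // => -[m mn] _ /=.
by rewrite horner_wpoly (bigD1 (Ordinal mn)) //= mul_node subrr mul0r mulr0.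
Qed.

Lemma sum_wcoef0 n : (0 < n)%N -> \sum_(j < n.+1) wcoef n j = 0.
Proof.
move=> n0; have := @sum_wcoef_horner n 1; rewrite size_poly1 => /(_ isT).
under eq_bigr do rewrite hornerE mulr1.
by rewrite coefC (negbTE (lt0n_neq0 n0)) mul0r.
Qed.

(* Partial fractions: [h - h.[x]] is divisible by ['X - x], where [h] has the
   nodes as roots. *)
Lemma sum_wcoef_div n x : (forall j : 'I_n.+1, node j != x) ->
  \sum_(j < n.+1) wcoef n j / (node j - x) =
  - wnode n / \prod_(i < n.+1) (x - node i).
Proof.
move=> node_x; have nx_neq0 (j : 'I_n.+1) : node j - x != 0 by rewrite subr_eq0.
set h := \prod_(i < n.+1) ('X - (node i)%:P).
set hx := \prod_(i < n.+1) (x - node i).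
have hx_neq0 : hx != 0.
  by apply/prodf_neq0 => i _; rewrite -opprB oppr_eq0.
have : root (h - (h.[x])%:P) x by rewrite /root hornerD hornerN hornerC subrr.
case/factor_theorem => g hg.
have hxE : h.[x] = hx by rewrite horner_prod; apply: eq_bigr => i _; rewrite hornerXsubC.
have g_node (j : 'I_n.+1) : g.[node j] * (node j - x) = - hx.
  have := congr1 (horner^~ (node j)) hg; rewrite /= hornerM hornerXsubC => <-.
  rewrite hornerD hornerN hornerC hxE horner_prod (bigD1 j) //=.
  by rewrite hornerXsubC subrr mul0r sub0r.
have h_size : size h = n.+2.
  by rewrite size_prod_XsubC [index_enum _]unlock -enumT size_enum_ord.
have hC_size : size (h - (h.[x])%:P) = n.+2.
  by rewrite size_polyDl h_size // size_polyN size_polyC; case: (_ != 0).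
have hC_lead : lead_coef (h - (h.[x])%:P) = 1.
  rewrite lead_coefDl ?(monicP (monic_prod_XsubC _ _ _)) // h_size.
  by rewrite size_polyN size_polyC; case: (_ != 0).
have g_neq0 : g != 0 by apply/eqP => g0; move: hC_size; rewrite hg g0 mul0r size_poly0.
have g_size : size g = n.+1.
  by move: hC_size; rewrite hg size_Mmonic ?monicXsubC // size_XsubC addn2 => -[].
have g_lead : g`_n = 1.
  by move: hC_lead; rewrite hg lead_coef_Mmonic ?monicXsubC // lead_coefE g_size.
transitivity (\sum_(j < n.+1) wcoef n j * g.[node j] * (- hx^-1)).
  apply: eq_bigr => j _; rewrite -mulrA; congr (_ * _).
  apply: (mulIf (nx_neq0 j)); rewrite mulVf // mulrAC g_node.
  by rewrite mulrN mulNr opprK divff.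
by rewrite -mulr_suml sum_wcoef_horner ?g_size // g_lead mul1r mulrN mulNr.
Qed.

Lemma wnode_rev n : wnode n = \prod_(i < n) (1 - node i.+1).
Proof.
rewrite /wnode horner_wpoly (reindex_inj rev_ord_inj) /=; apply: eq_bigr => i _.
congr (1 - _); rewrite /node.
have -> : q ^+ n = q ^+ (n - i.+1) * q ^+ i.+1 by rewrite -exprD subnK.
by rewrite invfM mulrA divff ?expq_neq0 // mul1r.
Qed.

Lemma prod_node_sq n : \prod_(i < n) (node i * node i.+1) = node (n ^ 2).
Proof.
elim: n => [|n IH]; first by rewrite big_ord0 /node expr0 invr1.
rewrite big_ord_recr /= IH /node -!invfM -!exprD; congr (_^-1); congr (_ ^+ _).
rewrite !expnSr !expn0 !mul1n; lia.
Qed.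

Lemma wnodeE n :
  wnode n = wcoef n n * node (n ^ 2) * \prod_(i < n) (1 - q * q ^+ i).
Proof.
rewrite wnode_rev wcoef_top -prod_node_sq -!big_split /=.
apply: eq_bigr => i _; rewrite /node exprS.
by have := expq_neq0 i; set y := q ^+ i => y0; field; rewrite y0 q_neq0.
Qed.

Lemma wnode_ratio n x :
  wnode n * \prod_(i < n) (1 - x * q * q ^+ i) =
  \prod_(i < n) (x - node i.+1) * \prod_(i < n) (1 - q * q ^+ i).
Proof.
rewrite wnode_rev -!big_split /=; apply: eq_bigr => i _.
rewrite /node exprS.
by have := expq_neq0 i; set y := q ^+ i => y0; field; rewrite y0 q_neq0.
Qed.

Lemma sum_node m : (\sum_(i < m.+1) node i) * (1 - q) = (1 - q ^+ m.+1) * node m.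
Proof.
elim: m => [|m IH]; first by rewrite big_ord1 expr1 mulrC.
rewrite big_ord_recr /= mulrDl IH /node !exprS.
by have := expq_neq0 m; set y := q ^+ m => y0; field; rewrite y0 q_neq0.
Qed.

End QDifference.

Section Moments.
Variables (R : realType) (p q : R).
Hypotheses (q_gt0 : 0 < q) (q_lt1 : q < 1) (p_ge0 : 0 <= p) (p_lt1 : p < 1).

Let q01 : 0 <= q <= 1. Proof. by rewrite !ltW. Qed.
Let q_neq0 : q != 0. Proof. by rewrite gt_eqF. Qed.
Let p01 : 0 <= p <= 1. Proof. by rewrite p_ge0 ltW. Qed.
Let qexp01 m : 0 <= q ^+ m <= 1. Proof. by rewrite exprn_ge0 ?exprn_ile1 // ltW. Qed.

Local Notation z := (node q).
Let expq_neq0 j : q ^+ j != 0. Proof. exact: expf_neq0. Qed.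

Definition pinf m := qpoch_inf (p * q ^+ m) q.
Definition qinf m := qpoch_inf (q ^+ m) q.

Lemma pinfS m : pinf m = (1 - p * q ^+ m) * pinf m.+1.
Proof. by rewrite /pinf (qpoch_infSl (mulr_expr_01 p01 q01 m) q01) exprSr mulrA. Qed.

Lemma qinfS m : qinf m = (1 - q ^+ m) * qinf m.+1.
Proof. by rewrite /qinf (qpoch_infSl (qexp01 m) q01) exprSr. Qed.

Lemma qinf0 : qinf 0 = 0.
Proof. by rewrite qinfS expr0 subrr mul0r. Qed.

Lemma pinf_gt0 m : 0 < pinf m.
Proof.
apply: qpoch_inf_gt0; last by rewrite q_gt0.
case/andP: (qexp01 m) => qm0 qm1.
by rewrite mulr_ge0 //= (le_lt_trans _ p_lt1) // ler_piMr.
Qed.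

Lemma qinf_gt0 m : 0 < qinf m.+1.
Proof.
apply: qpoch_inf_gt0; last by rewrite q_gt0.
by rewrite exprn_ge0 ?expr_lt1 // ltW.
Qed.

Lemma qinf_le_pinf m : qinf m <= pinf m.
Proof.
apply: ler_lim; [exact: qpoch_cvg | exact: qpoch_cvg (mulr_expr_01 p01 q01 m) q01 |].
near=> n; apply: ler_prod => i _.
have /andP[qmi0 qmi1] := qexp01 (m + i); rewrite exprD in qmi0 qmi1.
by rewrite subr_ge0 qmi1 lerD2l lerN2 -mulrA ler_piMl // ltW.
Unshelve. all: end_near.
Qed.

Lemma DeltaE m : Delta p q m = pinf m - qinf m. Proof. by []. Qed.

Lemma Delta_gt0 m : 0 < Delta p q m.
Proof.
rewrite DeltaE.
case: m => [|m]; first by rewrite qinf0 subr0 pinf_gt0.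
rewrite pinfS qinfS.
have /andP[_ pm1] := mulr_expr_01 p01 q01 m.+1.
apply: (@lt_le_trans _ _ ((1 - p) * q ^+ m.+1 * qinf m.+2)).
  by rewrite !mulr_gt0 ?qinf_gt0 ?exprn_gt0 // subr_gt0.
have -> : (1 - p) * q ^+ m.+1 * qinf m.+2
          = (1 - p * q ^+ m.+1) * qinf m.+2 - (1 - q ^+ m.+1) * qinf m.+2 by ring.
by rewrite lerD2r ler_wpM2l ?subr_ge0 ?qinf_le_pinf.
Qed.

Lemma Delta_neq0 m : Delta p q m != 0. Proof. by rewrite gt_eqF ?Delta_gt0. Qed.
Lemma pinf_neq0 m : pinf m != 0. Proof. by rewrite gt_eqF ?pinf_gt0. Qed.

Lemma qinf1E n : qinf 1 = qpoch q q n * qinf n.+1.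
Proof. by rewrite /qinf expr1 (qpoch_infSn n (qexp01 1)) -?exprS // expr1. Qed.

Lemma pinf1E n : pinf 1 = qpoch (p * q) q n * pinf n.+1.
Proof.
have := mulr_expr_01 p01 q01 1; rewrite expr1 => pq01.
by rewrite /pinf expr1 (qpoch_infSn n pq01 q01) exprS mulrA.
Qed.

Definition rho : R := q `^ (- (1 / 2)).

Lemma rho_gt0 : 0 < rho. Proof. exact: powR_gt0. Qed.
Lemma rho_neq0 : rho != 0. Proof. by rewrite gt_eqF ?rho_gt0. Qed.

Lemma powR_half k : q `^ (- (k%:R / 2)) = rho ^+ k.
Proof.
rewrite -powR_mulrn ?ltW ?rho_gt0 // /rho -powRrM; congr (_ `^ _).
by rewrite mulNr mul1r mulrC.
Qed.

Lemma rho_sqr : rho ^+ 2 = q^-1.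
Proof.
rewrite -powR_half divff ?pnatr_eq0 //.
by rewrite powRN powRr1 // ltW.
Qed.

Lemma rho_even n : rho ^+ (2 * n) = z n.
Proof. by rewrite exprM rho_sqr exprVn. Qed.

Lemma node_gt_p j : p < z j.
Proof.
rewrite (lt_le_trans p_lt1) // invr_ge1 ?exprn_ile1 ?exprn_gt0 ?ltW //.
by rewrite unitfE expq_neq0.
Qed.

Lemma node_subp_neq0 j : z j - p != 0.
Proof. by rewrite subr_eq0 gt_eqF ?node_gt_p. Qed.

Lemma qpoch_p_gt0 n : 0 < qpoch p q n.
Proof. by rewrite qpoch_gt0 ?p_ge0. Qed.

Lemma qpoch_q_neq0 n : qpoch q q n != 0.
Proof. by rewrite gt_eqF ?qpoch_gt0 ?ltW. Qed.

Lemma subr_pexpq_neq0 m : 1 - p * q ^+ m != 0.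
Proof.
by rewrite subr_eq0 gt_eqF // (le_lt_trans _ p_lt1) // ler_piMr // exprn_ile1 ?ltW.
Qed.

Definition mom (j : nat) : R := qpoch p q j * rho ^+ (j.+1 ^ 2).

Lemma mom_neq0 j : mom j != 0.
Proof. by rewrite mulf_neq0 ?expf_neq0 ?rho_neq0 ?gt_eqF ?qpoch_p_gt0. Qed.

Lemma mom0 : mom 0 = rho.
Proof. by rewrite /mom qpoch0 mul1r expr1. Qed.

Lemma stildeS j : stilde p q j.+1 = mom j.+1.
Proof. by rewrite /stilde /mom powR_half. Qed.

Lemma stilde0 : stilde p q 0 = mom 0 - rho * (qinf 1 / pinf 1).
Proof. by rewrite /stilde mom0 /qinf /pinf !expr1 /rho div1r; ring. Qed.

Lemma momS m : mom m.+1 = mom m * (1 - p * q ^+ m) * rho ^+ (2 * m + 3).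
Proof.
rewrite /mom qpochS (_ : m.+2 ^ 2 = m.+1 ^ 2 + (2 * m + 3))%N ?exprD; first by ring.
by rewrite !expnSr !expn0 !mul1n; lia.
Qed.

Lemma mom_shift j k : mom (j + k) =
  mom j * rho ^+ (2 * k + k ^ 2) * \prod_(i < k) (z j - p * q ^+ i).
Proof.
elim: k => [|k IH]; first by rewrite addn0 big_ord0 /= expr0 !mulr1.
rewrite addnS momS IH big_ord_recr /=.
have -> : (2 * k.+1 + k.+1 ^ 2 = (2 * k + k ^ 2) + (2 * k + 3))%N.
  by rewrite !expnSr !expn0 !mul1n; lia.
have -> : (2 * (j + k) + 3 = 2 * j + (2 * k + 3))%N by lia.
rewrite [rho ^+ (2 * j + _)]exprD rho_even [rho ^+ (_ + (2 * k + 3))]exprD [q ^+ (j + k)]exprD.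
have := mul_node q_neq0 j; set y := z j; set x := q ^+ j => xy.
set P := \prod_(i < k) _; set r1 := rho ^+ (2 * k + k ^ 2); set r2 := rho ^+ (2 * k + 3).
transitivity (mom j * r1 * P * r2 * (y - p * q ^+ k * (x * y))); first by ring.
by rewrite xy mulr1; ring.
Qed.

Definition alpha n := qinf n.+1 - p * pinf n.+1.

(* Dividing by [mom j] turns each moment [L (tpoly n * 'X^k)], [k >= 1], into a
   weighted sum over the nodes of a polynomial of degree [k + 1], which
   [sum_wcoef_horner] evaluates; [alpha n] makes the zeroth moment vanish. *)
Definition tnum n j := wcoef q n j * (alpha n + Delta p q n.+1 * z j) / (z j - p).
Definition tcoef n j := tnum n j / mom j.
Definition tpoly n : {poly R} :=
  if n is 0 then 1 else (tcoef n n)^-1 *: \poly_(j < n.+1) tcoef n j.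

Lemma alpha_DeltaS n : alpha n + Delta p q n.+1 * z n = z n * Delta p q n.
Proof.
rewrite /alpha !DeltaE [pinf n]pinfS [qinf n]qinfS /node.
by have := expq_neq0 n; set x := q ^+ n => x0; field.
Qed.

Lemma tcoef_top_neq0 n : tcoef n n != 0.
Proof.
rewrite /tcoef /tnum alpha_DeltaS.
by rewrite !mulf_neq0 ?invr_neq0 ?wcoef_top_neq0 ?node_subp_neq0 ?mom_neq0
  ?Delta_neq0 ?expq_neq0.
Qed.

Lemma size_tpoly n : size (tpoly n) = n.+1.
Proof.
case: n => [|n]; first by rewrite size_poly1.
by rewrite size_scale ?invr_neq0 ?tcoef_top_neq0 // size_poly_eq // tcoef_top_neq0.
Qed.

Lemma tpoly_monic n : (tpoly n)`_n = 1.
Proof.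
case: n => [|n]; first by rewrite coefC.
by rewrite coefZ coef_poly ltnSn mulVf ?tcoef_top_neq0.
Qed.

Definition tfactor n k : {poly R} :=
  ((alpha n)%:P + Delta p q n.+1 *: 'X) * \prod_(i < k) ('X - (p * q ^+ i.+1)%:P).

Lemma size_tfactor n k : (size (tfactor n k) <= k.+2)%N.
Proof.
apply: leq_trans (size_polyMleq _ _) _.
rewrite size_prod_XsubC [index_enum _]unlock -enumT size_enum_ord.
suff : (size ((alpha n)%:P + Delta p q n.+1 *: 'X)%R <= 2)%N by lia.
apply: leq_trans (size_polyD _ _) _; rewrite geq_max size_polyC.
apply/andP; split; first by case: (_ != 0).
by apply: leq_trans (size_scale_leq _ _) _; rewrite size_polyX.
Qed.

Lemma tfactor_top n k : (tfactor n k)`_k.+1 = Delta p q n.+1.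
Proof.
set M := \prod_(i < k) ('X - (p * q ^+ i.+1)%:P).
have M_size : size M = k.+1.
  by rewrite size_prod_XsubC [index_enum _]unlock -enumT size_enum_ord.
have /monicP : M \is monic by apply: monic_prod_XsubC.
rewrite lead_coefE M_size /= => M_lead.
rewrite /tfactor -/M mulrDl coefD coefCM -scalerAl coefZ coefXM /= M_lead mulr1.
by rewrite nth_default ?M_size // mulr0 add0r.
Qed.

Lemma tnum_prod n j k :
  tnum n j * \prod_(i < k.+1) (z j - p * q ^+ i) = wcoef q n j * (tfactor n k).[z j].
Proof.
rewrite big_ord_recl /= expr0 mulr1 /tnum /tfactor hornerM horner_prod !hornerE.
set P1 := \prod_(i < k) _; set P2 := \prod_(i < k) _.
have -> : P1 = P2 by apply: eq_bigr => i _; rewrite !hornerE.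
by rewrite /= divfK ?node_subp_neq0.
Qed.

Lemma Lmom_tpolyMXnS n k : (k <= n)%N ->
  Lmom p q (tpoly n.+1 * 'X^(k.+1)) = (tcoef n.+1 n.+1)^-1 *
    (rho ^+ (2 * k.+1 + k.+1 ^ 2) * ((tfactor n.+1 k)`_n.+1 * wnode q n.+1)).
Proof.
move=> kn; rewrite -scalerAl Lmom_scale Lmom_polyMXn; congr (_ * _).
rewrite -sum_wcoef_horner // ?(leq_trans (size_tfactor _ _)) // mulr_sumr.
apply: eq_bigr => j _; rewrite addnS stildeS -addnS mom_shift /tcoef -tnum_prod.
by field; rewrite mom_neq0.
Qed.

Lemma sum_tnum n : (0 < n)%N ->
  \sum_(j < n.+1) tnum n j =
  (alpha n + Delta p q n.+1 * p) * (- wnode q n / \prod_(i < n.+1) (p - z i)).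
Proof.
move=> n0; rewrite -(sum_wcoef_div q_neq0) => [|j]; last by rewrite gt_eqF ?node_gt_p.
transitivity (\sum_(j < n.+1) (Delta p q n.+1 * wcoef q n j +
  (alpha n + Delta p q n.+1 * p) * (wcoef q n j / (z j - p)))).
  by apply: eq_bigr => j _; rewrite /tnum; field; rewrite node_subp_neq0.
by rewrite big_split /= -!mulr_sumr sum_wcoef0 // mulr0 add0r.
Qed.

Lemma Lmom_tpoly0 n : (0 < n)%N -> Lmom p q (tpoly n * 'X^0) = 0.
Proof.
case: n => [//|n] _; rewrite -scalerAl Lmom_scale Lmom_polyMXn.
have -> : \sum_(j < n.+2) tcoef n.+1 j * stilde p q (j + 0) =
    \sum_(j < n.+2) tnum n.+1 j - tnum n.+1 0 * (qinf 1 / pinf 1).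
  rewrite big_ord_recl [in RHS]big_ord_recl.
  have -> : \sum_(i < n.+1) tcoef n.+1 (lift ord0 i) * stilde p q (lift ord0 i + 0) =
            \sum_(i < n.+1) tnum n.+1 (lift ord0 i).
    by apply: eq_bigr => i _; rewrite lift0 addn0 stildeS /tcoef divfK ?mom_neq0.
  rewrite (_ : stilde p q (ord0 + 0) = stilde p q 0) // stilde0 /tcoef mom0; field.
  by rewrite rho_neq0 pinf_neq0.
rewrite sum_tnum // /tnum wcoef0 /node expr0 invr1 mul1r.
rewrite big_ord_recl /node expr0 invr1 (qinf1E n.+1) (pinf1E n.+1).
have := wnode_ratio q_neq0 n.+1 p; rewrite -/(qpoch (p * q) q _) -/(qpoch q q _).
set Pz := \prod_(i < n.+1) _ => wnodeE.
have Pz_neq0 : Pz != 0.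
  by apply/prodf_neq0 => i _; rewrite subr_eq0 lt_eqF ?node_gt_p.
have pq_neq0 : qpoch (p * q) q n.+1 != 0.
  rewrite gt_eqF // qpoch_gt0 // mulr_ge0 ?(ltW q_gt0) //=.
  by rewrite (le_lt_trans _ p_lt1) // ler_piMr // ltW.
have -> : wnode q n.+1 = Pz * qpoch q q n.+1 / qpoch (p * q) q n.+1.
  by rewrite -wnodeE mulfK.
have p1_neq0 : 1 - p != 0 by rewrite subr_eq0 gt_eqF.
have := pinf_neq0 n.+2; rewrite /alpha !DeltaE => pinf_neq0'.
by field; rewrite pinf_neq0' pq_neq0 p1_neq0 Pz_neq0 subr_eq0 lt_eqF ?tcoef_top_neq0.
Qed.

Lemma Lmom_tpoly_orth n k : (k < n)%N -> Lmom p q (tpoly n * 'X^k) = 0.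
Proof.
case: k => [|k] kn; first exact: Lmom_tpoly0.
case: n kn => [//|n] kn; rewrite Lmom_tpolyMXnS; last by rewrite -ltnS ltnW.
by rewrite (nth_default 0 (leq_trans (size_tfactor _ _) kn)) mul0r !mulr0.
Qed.

Lemma wnode_rho n : wnode q n = wcoef q n n * rho ^+ (2 * n ^ 2) * qpoch q q n.
Proof. by rewrite (wnodeE q_neq0) rho_even. Qed.

Definition hnorm n := Delta p q n.+1 / Delta p q n * qpoch q q n * qpoch p q n.+1 *
  rho ^+ (4 * n ^ 2 + 4 * n + 1).

Lemma hnorm_neq0 n : hnorm n != 0.
Proof.
rewrite !mulf_neq0 ?invr_neq0 ?Delta_neq0 ?qpoch_q_neq0 ?expf_neq0 ?rho_neq0 //.
by rewrite gt_eqF ?qpoch_p_gt0.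
Qed.

Lemma Lmom_tpoly_norm n : Lmom p q (tpoly n * 'X^n) = hnorm n.
Proof.
case: n => [|n].
  rewrite mulr1 /Lmom size_poly1 big_ord1 coefC mul1r stilde0 mom0 /hnorm.
  rewrite !DeltaE qinf0 [pinf 0]pinfS qpochS !qpoch0 !expr0 !mulr1 subr0 mul1r expr1.
  by field; rewrite pinf_neq0 subr_eq0 gt_eqF.
rewrite Lmom_tpolyMXnS // tfactor_top /tcoef /tnum alpha_DeltaS wnode_rho /mom.
rewrite /hnorm [qpoch p q n.+2]qpochS.
have -> : rho ^+ (4 * n.+1 ^ 2 + 4 * n.+1 + 1) =
          rho ^+ (2 * n.+1 + n.+1 ^ 2) * rho ^+ (2 * n.+1 ^ 2) * rho ^+ (n.+2 ^ 2).
  by rewrite -!exprD; congr (_ ^+ _); rewrite !expnSr !expn0 !mul1n; lia.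
have := node_subp_neq0 n.+1; rewrite /node.
have := expq_neq0 n.+1; set x := q ^+ n.+1 => x_neq0 xp_neq0.
have := Delta_neq0 n.+1; have := wcoef_top_neq0 q_neq0 n.+1.
have := qpoch_p_gt0 n.+1; rewrite lt0r => /andP[pq_neq0 _] wc_neq0 D_neq0.
have px_neq0 : 1 - p * x != 0 by exact: subr_pexpq_neq0.
by field; rewrite mulNr D_neq0 pq_neq0 x_neq0 wc_neq0 px_neq0 expf_neq0 ?rho_neq0.
Qed.

(* [csum n = ctilde 1 + ... + ctilde n], minus the subleading coefficient of [tpoly n]. *)
Definition csum k :=
  ((1 - q ^+ k) * pinf k.-1 - (1 - p * q ^+ k) * qinf k.-1) *
  (rho ^+ (4 * k).-1 / ((1 - q) * Delta p q k)).

Lemma tpoly_subtop m : (tpoly m.+1)`_m = - csum m.+1.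
Proof.
rewrite coefZ coef_poly (ltnW (ltnSn m.+1)) /tcoef /tnum (wcoef_subtop q_neq0).
rewrite alpha_DeltaS momS.
have q1_neq0 : 1 - q != 0 by rewrite subr_eq0 gt_eqF.
have -> : \sum_(i < m.+1) z i = (1 - q ^+ m.+1) * z m / (1 - q).
  by rewrite -(sum_node q_neq0) mulfK.
rewrite /csum (_ : m.+1.-1 = m) // [pinf m]pinfS [pinf m.+1]pinfS.
rewrite [qinf m]qinfS [qinf m.+1]qinfS /alpha [Delta p q m.+2]DeltaE.
rewrite (_ : (4 * m.+1).-1 = 2 * (2 * m) + 3)%N; last by lia.
rewrite [rho ^+ (2 * (2 * m) + 3)]exprD [rho ^+ (2 * m + 3)]exprD !rho_even.
have -> : z (2 * m) = z m ^+ 2 by rewrite /node mulnC exprM exprVn.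
have := node_subp_neq0 m; have := node_subp_neq0 m.+1.
have := Delta_neq0 m.+1; have := wcoef_top_neq0 q_neq0 m.+1; have := mom_neq0 m.
have := subr_pexpq_neq0 m; have := subr_pexpq_neq0 m.+1; have := expq_neq0 m.
rewrite /node [q ^+ m.+1]exprS.
set x := q ^+ m; set c := wcoef _ _ _; set M := mom m; set D := Delta _ _ _.
move=> x_neq0 px1_neq0 px_neq0 M_neq0 c_neq0 D_neq0 z1_neq0 z_neq0.
by field; rewrite !mulNr D_neq0 q1_neq0 x_neq0 M_neq0 px_neq0 rho_neq0 q_neq0 px1_neq0 c_neq0.
Qed.

Lemma ctilde1E : ctilde p q 1 = csum 1.
Proof.
change (ctilde p q 1) with (qpoch_inf p q / Delta p q 1 * q `^ (- (3 / 2))).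
rewrite /csum qinf0 powR_half (_ : qpoch_inf p q = pinf 0); last by rewrite /pinf expr0 mulr1.
rewrite (_ : (4 * 1).-1 = 3)%N // expr1 mulr0 subr0.
by field; rewrite Delta_neq0 subr_eq0 gt_eqF.
Qed.

Lemma powR_csumS n : q `^ (- (2 * n.+1)%:R - 3 / 2) = rho ^+ (4 * n.+2).-1.
Proof.
rewrite -powR_half; congr (q `^ _).
have -> : ((4 * n.+2).-1 = 4 * n + 7)%N by lia.
have -> : (2 * n.+1 = 2 * n + 2)%N by lia.
by rewrite !natrD ?natrM; lra.
Qed.

Lemma powR_csum n : q `^ (- (2 * n.+1)%:R + 1 / 2) = rho ^+ (4 * n.+1).-1.
Proof.
rewrite -powR_half; congr (q `^ _).
have -> : ((4 * n.+1).-1 = 4 * n + 3)%N by lia.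
have -> : (2 * n.+1 = 2 * n + 2)%N by lia.
by rewrite !natrD ?natrM; lra.
Qed.

Lemma ctildeSSE n : ctilde p q n.+2 = csum n.+2 - csum n.+1.
Proof.
change (ctilde p q n.+2) with (
  ((1 - q ^+ n.+2) * pinf n.+1 - (1 - p * q ^+ n.+2) * qinf n.+1)
    * (q `^ (- (2 * n.+1)%:R - 3 / 2) / ((1 - q) * Delta p q n.+2))
  - ((1 - q ^+ n.+1) * pinf n - (1 - p * q ^+ n.+1) * qinf n)
    * (q `^ (- (2 * n.+1)%:R + 1 / 2) / ((1 - q) * Delta p q n.+1))).
by rewrite powR_csumS powR_csum.
Qed.

Lemma lamtildeE n : lamtilde p q n.+2 = hnorm n.+1 / hnorm n.
Proof.
rewrite /lamtilde /hnorm [qpoch q q n.+1]qpochS [qpoch p q n.+2]qpochS.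
have -> : rho ^+ (4 * n.+1 ^ 2 + 4 * n.+1 + 1) =
          rho ^+ (4 * n ^ 2 + 4 * n + 1) * rho ^+ (2 * (4 * n.+1)).
  by rewrite -exprD; congr (_ ^+ _); rewrite !expnSr !expn0 !mul1n; lia.
rewrite rho_even /node -exprS.
have := Delta_neq0 n; have := Delta_neq0 n.+1; have := Delta_neq0 n.+2.
have := qpoch_q_neq0 n; have := qpoch_p_gt0 n.+1; rewrite lt0r => /andP[pq_neq0 _].
move=> qq_neq0 D2_neq0 D1_neq0 D0_neq0.
have r_neq0 : rho ^+ (4 * n ^ 2 + 4 * n + 1) != 0 by rewrite expf_neq0 ?rho_neq0.
have q1_neq0 : 1 - q ^+ n.+1 != 0 by rewrite subr_eq0 eq_sym lt_eqF // expr_lt1 // ltW.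
have := subr_pexpq_neq0 n.+1; have := expq_neq0 (4 * n.+1) => x_neq0 px_neq0.
by field; rewrite ?D0_neq0 ?D1_neq0 ?D2_neq0 ?qq_neq0 ?pq_neq0 ?r_neq0 ?x_neq0
  ?px_neq0 ?q1_neq0.
Qed.

Lemma Lmom_tpoly_norm_neq0 n : Lmom p q (tpoly n * 'X^n) != 0.
Proof. by rewrite Lmom_tpoly_norm hnorm_neq0. Qed.

Lemma ptilde_rec_tpoly n : ptilde_rec p q n = tpoly n.
Proof.
have tpoly_rec := mops_rec (Lmom_add p q) (Lmom_scale p q) size_tpoly tpoly_monic
  Lmom_tpoly_orth Lmom_tpoly_norm_neq0.
apply: ptilde_rec_eq => [//||k].
- by rewrite (mops1 size_tpoly tpoly_monic) tpoly_subtop opprK ctilde1E.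
- rewrite tpoly_rec !tpoly_subtop ctildeSSE lamtildeE !Lmom_tpoly_norm.
  by congr (('X - _%:P) * _ - _); ring.
Qed.

End Moments.

Theorem theorem5 (R : realType) (p q : R) :
  0 < q -> q < 1 -> 0 <= p -> p < 1 ->
  forall P : nat -> {poly R},
    (forall n, size (P n) = n.+1) ->
    (forall n, 0 < lead_coef (P n)) ->
    (forall m n, Lmom p q (P m * P n) = (m == n)%:R) ->
    forall n, (lead_coef (P n))^-1 *: P n = ptilde_rec p q n.
Proof.
move=> q_gt0 q_lt1 p_ge0 p_lt1 P P_size _ P_orthonormal n.
have P_orth m k : m != k -> Lmom p q (P m * P k) = 0.
  by rewrite P_orthonormal => /negbTE ->.
rewrite (ptilde_rec_tpoly q_gt0 q_lt1 p_ge0 p_lt1).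
apply: (orth_seq_normalized (Lmom_add p q) (Lmom_scale p q)) P_size P_orth n.
- exact: size_tpoly.
- exact: tpoly_monic.
- exact: Lmom_tpoly_orth.
- exact: Lmom_tpoly_norm_neq0.
Qed.
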